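(* Let $T_1=(Q_1,\Sigma,\Delta,R_1,q_1^0)$ and $T_2=(Q_2,\Delta,\Omega,R_2,q_2^0)$ be top-down tree transducers, let $A$ be the domain automaton of $T_2$, and let $\hat{T}_1$ be the product construction of $T_1$ and $A$. If a state $(q,S)$ of $\hat{T}_1$ produces a tree $t\in T_\Delta$ on some input $s\in T_\Sigma$ and $S\neq\emptyset$, then $t\in\bigcap_{q_2\in S}\text{dom}(q_2)$.
   Context: A top-down tree transducer $T=(Q,\Sigma,\Delta,R,q_0)$ has finite state set $Q$, ranked input/output alphabets $\Sigma,\Delta$, initial state $q_0$, and finite rule set $R$ of rules $q(a(x_1,\dots,x_k))\to t$ with $a\in\Sigma_k$ ($\Sigma_k$ = symbols of rank $k$) and $t$ a tree over $\Delta$ whose leaves may additionally be of the form $q'(x_i)$, $q'\in Q$, $i\in[k]$; rules are used as rewrite rules in the usual way. A state $q$ produces $t$ on input $s$ if the tree $t$ over $\Delta$ is derivable from $q(s)$; $\text{dom}(q)$ is the set of inputs on which $q$ produces some tree. For $q\in Q$, $a\in\Sigma_k$, $\text{rhs}_T(q,a)$ is the set of right-hand sides of rules with left-hand side $q(a(x_1,\dots,x_k))$; for a set $\Gamma$ of right-hand sides, $\Gamma[x_i]$ is the set of $q'\in Q$ with $q'(x_i)$ occurring in some tree of $\Gamma$. Domain automaton of $T$: the top-down tree automaton (transducer over $\Sigma$ with rules of the form $p(a(x_1,\dots,x_k))\to a(p_1(x_1),\dots,p_k(x_k))$) with states all subsets of $Q$, initial state $\{q_0\}$, rules $S(a(x_1,\dots,x_k))\to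 a(S_1(x_1),\dots,S_k(x_k))$ for every $a\in\Sigma_k$, nonempty $S=\{q_1,\dots,q_n\}\subseteq Q$ and nonempty $\Gamma_j\subseteq\text{rhs}_T(q_j,a)$ ($j\in[n]$), where $S_i=\bigcup_j\Gamma_j[x_i]$, and rules $\emptyset(a(x_1,\dots,x_k))\to a(\emptyset(x_1),\dots,\emptyset(x_k))$ for all $a$. Product construction of transducers $T=(Q,\Sigma,\Delta,R,q_0)$ and $T'=(Q',\Delta,\Omega,R',q'_0)$: the transducer with states $Q\times Q'$, input $\Sigma$, output $\Omega$, initial state $(q_0,q'_0)$, and, for every rule $q(a(x_1,\dots,x_k))\to\xi$ of $T$, every $p\in Q'$ and every tree $\zeta$ derivable from $p(\xi)$ using rules of $T'$ in which the leaves of $\xi$ of the form $q''(x_i)$ are treated as unrewritable symbols and a state $p'$ applied to such a leaf stays as $p'(q''(x_i))$ (so $\zeta$ is a tree over $\Omega$ with leaves possibly of the form $p'(q''(x_i))$), the rule $(q,p)(a(x_1,\dots,x_k))\to\zeta'$, where $\zeta'$ is obtained from $\zeta$ by replacing each $p'(q''(x_i))$ by $(q'',p')(x_i)$. *)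

From Stdlib Require List.
From mathcomp Require Import all_boot.
Set Implicit Arguments. Unset Strict Implicit. Unset Printing Implicit Defensive.

Record ranked := Ranked { rsym :> finType; rank : rsym -> nat }.

Inductive tree (L : Type) := Node of L & seq (tree L).
Arguments Node {L}.

Fixpoint wr (F : ranked) (t : tree F) : bool :=
  let: Node a ts := t in (size ts == rank a) && all (@wr F) ts.

(* Right-hand sides: trees over an output alphabet D whose leaves may be
   q(x_i); [RCall q i] stands for q(x_{i+1}) (variables are 0-indexed). *)
Inductive rhs (Q D : Type) :=
| RNode of D & seq (rhs Q D)
| RCall of Q & nat.
Arguments RNode {Q D}.
Arguments RCall {Q D}.

Fixpoint rhs_wf (Q : Type) (D : ranked) (k : nat) (r : rhs Q D) : bool :=
  match r with
  | RNode d rs => (size rs == rank d) && all (@rhs_wf Q D k) rs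
  | RCall _ i => i < k
  end.

Fixpoint occurs (Q : eqType) (D : Type) (q' : Q) (i : nat) (r : rhs Q D) : bool :=
  match r with
  | RNode _ rs => has (@occurs Q D q' i) rs
  | RCall q j => (q == q') && (j == i)
  end.

(* Top-down tree transducer T = (Q, Sig, Del, R, q0) with finite rule set R;
   a rule (q, a, t) is  q(a(x_1..x_k)) -> t. *)
Record tdtt (Sig Del : ranked) := Tdtt {
  st : finType;
  q0 : st;
  rules : seq (st * Sig * rhs st Del) }.

Definition wf_td (Sig Del : ranked) (T : tdtt Sig Del) : Prop :=
  forall q a r, List.In (q, a, r) (rules T) -> rhs_wf (rank a) r.

Definition td_rules (Sig Del : ranked) (T : tdtt Sig Del)
  : st T -> Sig -> rhs (st T) Del -> Prop :=
  fun q a r => List.In (q, a, r) (rules T).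

(* Labels of sentential forms: states (unary), input symbols, output
   symbols, and unrewritable constant leaves. *)
Inductive slab (Q I O C : Type) :=
| LState of Q | LIn of I | LOut of O | LConst of C.
Arguments LState {Q I O C}. Arguments LIn {Q I O C}.
Arguments LOut {Q I O C}. Arguments LConst {Q I O C}.

Section Rewriting.
Variables (Q I O C : Type).
Notation sf := (tree (slab Q I O C)).

Fixpoint inst (r : rhs Q O) (ts : seq sf) : sf :=
  match r with
  | RNode d rs => Node (LOut d) (map (fun r' => inst r' ts) rs)
  | RCall q i => Node (LState q) [:: nth (Node (LState q) [::]) ts i]
  end.

Variable R : Q -> I -> rhs Q O -> Prop.

Inductive step : sf -> sf -> Prop :=
| step_root q a ts r : R q a r ->
    step (Node (LState q) [:: Node (LIn a) ts]) (inst r ts)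
| step_ctx l ts1 t t' ts2 : step t t' ->
    step (Node l (ts1 ++ t :: ts2)) (Node l (ts1 ++ t' :: ts2)).

Inductive derives : sf -> sf -> Prop :=
| der_refl t : derives t t
| der_step t t' t'' : step t t' -> derives t' t'' -> derives t t''.
End Rewriting.

Fixpoint embed_in (Q I O C : Type) (s : tree I) : tree (slab Q I O C) :=
  let: Node a ss := s in Node (LIn a) (map (@embed_in Q I O C) ss).
Fixpoint embed_out (Q I O C : Type) (t : tree O) : tree (slab Q I O C) :=
  let: Node a ts := t in Node (LOut a) (map (@embed_out Q I O C) ts).

Definition produces (Q I O : Type) (R : Q -> I -> rhs Q O -> Prop)
  (q : Q) (s : tree I) (t : tree O) : Prop :=
  derives (C := void) R (Node (LState q) [:: @embed_in Q I O void s]) (@embed_out Q I O void t).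

Definition in_dom (Q I : Type) (O : ranked) (R : Q -> I -> rhs Q O -> Prop)
  (q : Q) (s : tree I) : Prop :=
  exists t : tree O, wr t /\ produces R q s t.

Section DomAut.
Variables (Del Om : ranked) (T : tdtt Del Om).

Definition dom_aut_init : {set st T} := [set q0 T].

Definition dom_aut_rules (S : {set st T}) (a : Del) (r : rhs {set st T} Del)
  : Prop :=
  exists Si : nat -> {set st T},
    r = RNode a [seq RCall (Si i) i | i <- iota 0 (rank a)] /\
    ( (S = set0 /\ forall i, i < rank a -> Si i = set0)
    \/ (S != set0 /\
        exists Gamma : st T -> seq (rhs (st T) Om),
          (forall q, q \in S -> Gamma q <> [::] /\
             forall g, List.In g (Gamma q) -> List.In (q, a, g) (rules T)) /\
          (forall i, i < rank a -> forall q',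
             q' \in Si i <->
             exists q, q \in S /\ exists g, List.In g (Gamma q) /\ occurs q' i g))).
End DomAut.

Section Product.
Variables (Sig Del Om : ranked) (Q Q' : Type).
Variable R : Q -> Sig -> rhs Q Del -> Prop.
Variable R' : Q' -> Del -> rhs Q' Om -> Prop.
Notation sf := (tree (slab Q' Del Om (Q * nat))).

(* xi, with leaves q''(x_i) as unrewritable constants *)
Fixpoint rhs_as_input (xi : rhs Q Del) : sf :=
  match xi with
  | RNode d xs => Node (LIn d) (map rhs_as_input xs)
  | RCall q i => Node (LConst (q, i)) [::]
  end.

(* zeta' seen as zeta: (q'',p')(x_i) becomes p'(q''(x_i)) *)
Fixpoint prod_rhs_as_sf (z : rhs (Q * Q') Om) : sf :=
  match z with
  | RNode w zs => Node (LOut w) (map prod_rhs_as_sf zs)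
  | RCall (q, p) i => Node (LState p) [:: Node (LConst (q, i)) [::]]
  end.

Definition prod_rules (qp : Q * Q') (a : Sig) (z : rhs (Q * Q') Om) : Prop :=
  exists xi, R qp.1 a xi /\
    derives R' (Node (LState qp.2) [:: rhs_as_input xi]) (prod_rhs_as_sf z).
End Product.

Arguments td_rules [Sig Del] T _ _ _.
Arguments dom_aut_rules [Del Om] T S%_set_scope a r.
Arguments dom_aut_init [Del Om] T.

From mathcomp Require Import all_boot.
Set Implicit Arguments. Unset Strict Implicit. Unset Printing Implicit Defensive.

(* A derivation of (q, S) on a(s_1, ..., s_k) starts
   with a product rule, made of a rule q(a(x_1, ..., x_k)) -> xi of T1 and a
   run of the domain automaton from S on xi in which the leaves q''(x_i) of xi
   are constants.  The rest of the derivation replaces every call (q'', p)(x_i)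
   of the resulting right-hand side by an output of (q'', p) on s_i, which by
   induction lies in dom(q2) for all q2 in p.  A second induction, on xi, lifts
   this to S: at a node d(xi_1, ..., xi_n) the automaton has chosen, for each
   q2 in S, a nonempty set of d-rules of q2 and has sent every state they call
   on x_j to the j-th child, so some d-rule of q2 has all its calls defined. *)

Fixpoint tree_nested_ind (L : Type) (P : tree L -> Prop)
    (IH : forall l ts, List.Forall P ts -> P (Node l ts)) (t : tree L) : P t :=
  let: Node l ts := t in
  IH l ts ((fix all_P ts : List.Forall P ts :=
              if ts is t :: ts' then List.Forall_cons _ (tree_nested_ind IH t) (all_P ts')
              else List.Forall_nil _) ts).

Fixpoint rhs_nested_ind (Q D : Type) (P : rhs Q D -> Prop)
    (IHnode : forall d rs, List.Forall P rs -> P (RNode d rs))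
    (IHcall : forall q i, P (RCall q i)) (r : rhs Q D) : P r :=
  match r with
  | RNode d rs =>
      IHnode d rs ((fix all_P rs : List.Forall P rs :=
                      if rs is r :: rs' then
                        List.Forall_cons _ (rhs_nested_ind IHnode IHcall r) (all_P rs')
                      else List.Forall_nil _) rs)
  | RCall q i => IHcall q i
  end.

Lemma Forall_nth T (P : T -> Prop) x0 s i :
  List.Forall P s -> i < size s -> P (nth x0 s i).
Proof. by move=> Ps; elim: Ps i => [|x s' Px _ IH] [|i] //=; apply: IH. Qed.

Lemma Forall_all T (P : T -> Prop) (b : pred T) s :
  (forall x, P x -> b x) -> List.Forall P s -> all b s.
Proof. by move=> Pb; elim=> //= x s' /Pb -> _. Qed.

Lemma Forall2_size A B (P : A -> B -> Prop) xs ys :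
  List.Forall2 P xs ys -> size xs = size ys.
Proof. by elim=> //= x y xs' ys' _ _ ->. Qed.

Lemma Forall2_nth A B (P : A -> B -> Prop) x0 y0 xs ys i :
  List.Forall2 P xs ys -> i < size xs -> P (nth x0 xs i) (nth y0 ys i).
Proof. by move=> Pxy; elim: Pxy i => [|x y xs' ys' Pxy _ IH] [|i] //=; apply: IH. Qed.

Section Derivations.
Variables (Q I O C : Type) (R : Q -> I -> rhs Q O -> Prop).
Local Notation sf := (tree (slab Q I O C)).
Local Notation der := (@derives Q I O C R).

Lemma derives_trans (t t' t'' : sf) : der t t' -> der t' t'' -> der t t''.
Proof. by elim=> // u u' u'' Su _ IH /IH; apply: der_step. Qed.

Lemma derives_child l ts1 ts2 (t t' : sf) :
  der t t' -> der (Node l (ts1 ++ t :: ts2)) (Node l (ts1 ++ t' :: ts2)).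
Proof.
elim=> [u|u u' u'' Su _ IH]; first exact: der_refl.
exact: der_step (step_ctx _ _ _ Su) IH.
Qed.

Lemma derives_children l ts us :
  List.Forall2 der ts us -> der (Node l ts) (Node l us).
Proof.
move=> F; rewrite -[ts]cat0s -[us]cat0s; move: [::] => pre.
elim: F pre => [|t u ts' us' Dtu _ IH] pre; first exact: der_refl.
apply: derives_trans (derives_child l pre ts' Dtu) _.
by rewrite -!cat_rcons; apply: IH.
Qed.

Lemma Forall2_derives_refl (ts : seq sf) : List.Forall2 der ts ts.
Proof. by elim: ts => // t ts IH; constructor; first exact: der_refl. Qed.

Lemma Forall2_derives_step ts1 ts2 (t t' : sf) us :
  step R t t' -> List.Forall2 der (ts1 ++ t' :: ts2) us ->
  List.Forall2 der (ts1 ++ t :: ts2) us.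
Proof.
move=> St; elim: ts1 us => [|t1 ts1 IH] us F; inversion F; subst; constructor => //.
- exact: der_step St _.
- exact: IH.
Qed.

Definition is_state (l : slab Q I O C) : bool := if l is LState _ then true else false.

Lemma derives_node_inv l ts u :
  ~~ is_state l -> der (Node l ts) u ->
  exists2 us, u = Node l us & List.Forall2 der ts us.
Proof.
move=> not_state; move Et: (Node l ts) => t D.
elim: D ts Et => [{}t|{}t t' t'' St _ IH] ts Et; subst t.
  by exists ts; last exact: Forall2_derives_refl.
inversion St; subst => //.
have [us -> F] := IH _ erefl; exists us => //.
exact: Forall2_derives_step F.
Qed.

Lemma step_leaf l (t : sf) : ~ step R (Node l [::]) t.
Proof. by move E: (Node l [::]) => t0 St; case: St E => // l' [|? ?]. Qed.

Lemma derives_leaf l u : der (Node l [::]) u -> u = Node l [::].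
Proof. by move=> D; inversion D as [|? t' ? St]; last case: (step_leaf St). Qed.

Lemma derives_state_inv q x u :
  der (Node (LState q) [:: x]) u ->
  (exists2 x', u = Node (LState q) [:: x'] & der x x') \/
  (exists a ts r, [/\ der x (Node (LIn a) ts), R q a r & der (inst r ts) u]).
Proof.
move Et: (Node (LState q) [:: x]) => t D.
elim: D x Et => [{}t|{}t t' t'' St D IH] x Et; subst t.
  by left; exists x => //; apply: der_refl.
move Es: (Node (LState q) [:: x]) St => s St.
case: St Es IH D => [q' a ts r Rr [-> ->] _ D|l ts1 y y' ts2 Sy [<- Ets] IH _].
  by right; exists a, ts, r; split => //; apply: der_refl.
case: ts1 Ets IH => [|? []] //= [-> <-] IH.
case: (IH y' erefl) => [[x' -> Dx']|[a [ts [r [Dx Rr Dr]]]]].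
  by left; exists x' => //; apply: der_step Sy Dx'.
by right; exists a, ts, r; split => //; apply: der_step Sy Dx.
Qed.

Fixpoint state_free (t : sf) : bool :=
  let: Node l ts := t in ~~ is_state l && all state_free ts.

Lemma step_state_free (t t' : sf) : step R t t' -> ~~ state_free t.
Proof. by elim=> // l ts1 u u' ts2 _; rewrite /= all_cat /= => /negbTE->; rewrite !andbF. Qed.

Lemma derives_state_free (t u : sf) : state_free t -> der t u -> u = t.
Proof. by move=> free_t D; case: D free_t => // ? ? ? /step_state_free/negP. Qed.

End Derivations.

Lemma embed_in_state_free (Q I O C : Type) (s : tree I) :
  state_free (embed_in Q O C s).
Proof.
by elim/tree_nested_ind: s => a ss IH /=; rewrite all_map; apply: Forall_all IH.
Qed.

Lemma rhs_as_input_state_free (D O : ranked) (Q Q' : Type) (xi : rhs Q D) :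
  state_free (rhs_as_input O Q' xi).
Proof.
by elim/rhs_nested_ind: xi => //= d xs IH; rewrite all_map; apply: Forall_all IH.
Qed.

Lemma rhs_wf_occurs (Q : eqType) (D : ranked) k (g : rhs Q D) q i :
  rhs_wf k g -> occurs q i g -> i < k.
Proof.
elim/rhs_nested_ind: g => [d rs IH|q' j] /=; last by move=> lt_j /andP[_ /eqP <-].
case/andP=> _; elim: IH => //= r rs' IHr _ IHrs /andP[wf_r wf_rs] /orP[].
  exact: IHr.
exact: IHrs.
Qed.

Section Semantics.
Variables (Q : eqType) (I : Type) (O : ranked) (R : Q -> I -> rhs Q O -> Prop).

Lemma inst_derives_output C k (g : rhs Q O) (ts : seq (tree (slab Q I O C))) :
  rhs_wf k g ->
  (forall q i, occurs q i g ->
     exists2 o, wr o & derives R (inst (RCall q i) ts) (embed_out Q I C o)) ->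
  exists2 o, wr o & derives R (inst g ts) (embed_out Q I C o).
Proof.
elim/rhs_nested_ind: g => [d rs IH|q i] /=; last by move=> _; apply; rewrite /= !eqxx.
case/andP=> /eqP size_rs wf_rs calls_output.
have [os wr_os Dos] : exists2 os, all (@wr O) os &
    List.Forall2 (derives R) [seq inst r ts | r <- rs] [seq embed_out Q I C o | o <- os].
  elim: IH wf_rs calls_output {size_rs} => [|r rs' IHr _ IHrs]; first by exists [::].
  case/andP=> wf_r wf_rs' calls_output.
  have [o wr_o Dr] := IHr wf_r (fun q i occ => calls_output q i (introT orP (or_introl occ))).
  have [os wr_os Dos] := IHrs wf_rs' (fun q i occ => calls_output q i (introT orP (or_intror occ))).
  by exists (o :: os); [rewrite /= wr_o wr_os | constructor].
exists (Node d os); last exact: derives_children.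
by rewrite /= -size_rs -(size_map (embed_out Q I C)) -(Forall2_size Dos) size_map eqxx.
Qed.

Lemma in_dom_rule q a g k (ss : seq (tree I)) s0 :
  R q a g -> rhs_wf k g ->
  (forall q' i, occurs q' i g -> i < size ss /\ in_dom R q' (nth s0 ss i)) ->
  in_dom R q (Node a ss).
Proof.
move=> Rg wf_g calls_in_dom; set ts := map (embed_in Q O void) ss.
have [|o wr_o Do] := @inst_derives_output void k g ts wf_g.
  move=> q' i /calls_in_dom[lt_i [o [wr_o Do]]]; exists o => //=.
  by rewrite (nth_map s0).
by exists o; split => //; apply: der_step (step_root _ Rg) Do.
Qed.

End Semantics.

Section ProductWithDomainAutomaton.
Variables (Sig Del Om : ranked) (T1 : tdtt Sig Del) (T2 : tdtt Del Om).
Hypotheses (wf1 : wf_td T1) (wf2 : wf_td T2).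

Local Notation PS := {set st T2}.
Local Notation RA := (dom_aut_rules T2).
Local Notation RP := (prod_rules (td_rules T1) RA).
Local Notation derA := (@derives PS Del Del (st T1 * nat) RA).
Local Notation derP := (@derives (st T1 * PS) Sig Del void RP).
Local Notation RI xi := (rhs_as_input Del PS xi).
Local Notation PZ z := (prod_rhs_as_sf Del z).
Local Notation EO t := (embed_out (st T1 * PS) Sig void t).

Definition in_cap_dom (S : PS) (t : tree Del) : Prop :=
  forall q2, q2 \in S -> in_dom (td_rules T2) q2 t.

Definition calls_within (S : PS) (a : Del) (Si : nat -> PS) : Prop :=
  forall q2, q2 \in S -> exists2 g, td_rules T2 q2 a g &
    forall q i, occurs q i g -> i < rank a /\ q \in Si i.

Lemma dom_aut_rule_calls_within S a r :
  RA S a r -> S != set0 ->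
  exists2 Si, r = RNode a [seq RCall (Si i) i | i <- iota 0 (rank a)] & calls_within S a Si.
Proof.
case=> Si [-> [[-> _]|[_ [Gamma [Gamma_rules Si_def]]]]]; first by rewrite eqxx.
move=> _; exists Si => // q2 q2_S; have [Gamma_ne Gamma_in] := Gamma_rules q2 q2_S.
case EG: (Gamma q2) Gamma_ne => [|g gs] // _.
have g_Gamma : List.In g (Gamma q2) by rewrite EG; left.
have Rg := Gamma_in g g_Gamma.
exists g => // q i occ_g; have lt_i := rhs_wf_occurs (wf2 Rg) occ_g.
by split=> //; apply/(Si_def i lt_i); exists q2; split=> //; exists g.
Qed.

Lemma in_cap_dom_node S a Si ts t0 :
  calls_within S a Si -> size ts = rank a ->
  (forall i, i < rank a -> Si i != set0 -> in_cap_dom (Si i) (nth t0 ts i)) ->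
  in_cap_dom S (Node a ts).
Proof.
move=> within size_ts children q2 /within[g Rg calls].
apply: (in_dom_rule (s0 := t0) Rg (wf2 Rg)) => q i /calls[lt_i q_Si].
have Si_ne : Si i != set0 by apply/set0Pn; exists q.
by rewrite size_ts; split=> //; apply: children.
Qed.

Lemma dom_aut_run_call S q i z :
  derA (Node (LState S) [:: Node (LConst (q, i)) [::]]) (PZ z) -> z = RCall (q, S) i.
Proof.
move=> D; case: (derives_state_inv D) => [[x Ez /derives_leaf Ex]|[a [ts [r []]]]].
  by case: z Ez {D} => [w zs|[q' p] j] //=; rewrite Ex => -[-> -> ->].
by move/derives_leaf.
Qed.

Lemma dom_aut_run_node S d xs z :
  S != set0 -> size xs = rank d ->
  derA (Node (LState S) [:: RI (RNode d xs)]) (PZ z) ->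
  exists Si zs, [/\ z = RNode d zs, calls_within S d Si, size zs = rank d &
    forall i, i < rank d ->
      derA (Node (LState (Si i)) [:: RI (nth (RNode d [::]) xs i)])
           (PZ (nth (RNode d [::]) zs i))].
Proof.
move=> S_ne size_xs D.
case: (derives_state_inv D) => [[x Ez Dx]|[a [ts [r [Dx Rr Dr]]]]]; clear D.
  move/(derives_state_free (rhs_as_input_state_free _ _ _)): Dx => Ex; subst x.
  by case: z Ez => [w zs|[q p] j].
move/(derives_state_free (rhs_as_input_state_free _ _ _)): Dx => -[-> ->] in Rr Dr *.
have [Si Er within] := dom_aut_rule_calls_within Rr S_ne; subst r.
rewrite /= -map_comp in Dr.
have [us Ez Dus] := derives_node_inv (l := LOut d) isT Dr.
case: z Ez {Dr} => [w zs|[q p] j] //= [-> Eus]; subst us.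
have size_zs : size zs = rank d by move/Forall2_size: Dus; rewrite !size_map size_iota.
exists Si, zs; split=> // i lt_i.
have := Forall2_nth (Node (LState S) [::]) (Node (LState S) [::]) Dus.
rewrite !size_map size_iota => /(_ i lt_i).
by rewrite (nth_map 0) ?size_iota // nth_iota //= add0n !(nth_map (RNode d [::])) ?size_xs ?size_zs.
Qed.

Inductive dom_instance : rhs (st T1 * PS) Del -> tree Del -> Prop :=
| dom_instance_node w zs ts :
    List.Forall2 dom_instance zs ts -> dom_instance (RNode w zs) (Node w ts)
| dom_instance_call q p i t :
    (p != set0 -> in_cap_dom p t) -> dom_instance (RCall (q, p) i) t.

Lemma dom_aut_run_in_cap_dom k (xi : rhs (st T1) Del) S z t :
  rhs_wf k xi -> derA (Node (LState S) [:: RI xi]) (PZ z) -> dom_instance z t ->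
  S != set0 -> in_cap_dom S t.
Proof.
elim/rhs_nested_ind: xi S z t => [d xs IH|q i] S z t wf_xi Dxi zt S_ne; last first.
  by move: zt; rewrite (dom_aut_run_call Dxi) => zt; inversion zt; auto.
case/andP: wf_xi => /eqP size_xs wf_xs.
have [Si [zs [Ez within size_zs Dchildren]]] := dom_aut_run_node S_ne size_xs Dxi.
subst z; inversion zt as [w zs' ts Dts| ]; subst.
have size_ts : size ts = rank d by rewrite -size_zs (Forall2_size Dts).
apply: (in_cap_dom_node (t0 := Node d [::]) within size_ts) => j lt_j.
have wf_xj := (all_nthP (RNode d [::]) wf_xs) j; rewrite size_xs in wf_xj.
apply: (Forall_nth (RNode d [::]) IH) (wf_xj lt_j) (Dchildren j lt_j) _.
- by rewrite size_xs.
- by apply: Forall2_nth Dts _; rewrite size_zs.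
Qed.

Definition outputs_in_cap_dom (x : tree (slab (st T1 * PS) Sig Del void)) : Prop :=
  forall q S t, derP (Node (LState (q, S)) [:: x]) (EO t) -> S != set0 -> in_cap_dom S t.

Lemma inst_derives_dom_instance xs z t :
  List.Forall outputs_in_cap_dom xs -> derP (inst z xs) (EO t) -> dom_instance z t.
Proof.
move=> xs_in_cap_dom; elim/rhs_nested_ind: z t => [w zs IH|[q p] i] t Dz.
  have [us Et Dus] := derives_node_inv (l := LOut w) isT Dz.
  case: t Et {Dz} => w' ts [-> Eus]; subst us; constructor.
  elim: IH ts Dus => [|z zs' IHz _ IHzs] [|t ts] Dts; inversion Dts; constructor; auto.
constructor => p_ne; case: (ltnP i (size xs)) => [lt_i|ge_i] /= in Dz.
  exact: (Forall_nth _ xs_in_cap_dom lt_i) _ _ _ Dz p_ne.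
(* out of range, [inst] fills the call with the stuck leaf [Node (LState (q, p)) [::]] *)
rewrite nth_default // in Dz.
case: (derives_state_inv Dz) => [[x Et _]|[a [ts [r [/derives_leaf //]]]]].
by case: t Et Dz.
Qed.

Lemma embed_in_outputs_in_cap_dom (s : tree Sig) : outputs_in_cap_dom (embed_in _ _ void s).
Proof.
elim/tree_nested_ind: s => a ss IH q S t D S_ne.
case: (derives_state_inv D) => [[x Et _]|[a' [ts [z [Dx Rz Dz]]]]]; first by case: t Et D.
move/(derives_state_free (embed_in_state_free _ _ _ _)): Dx => -[-> Ets] in Rz Dz.
have [xi [Rxi Dxi]] := Rz.
apply: (dom_aut_run_in_cap_dom (wf1 Rxi) Dxi _ S_ne).
apply: inst_derives_dom_instance Dz; rewrite Ets.
by elim: IH => //= s ss' IHs _ IHss; constructor.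
Qed.

End ProductWithDomainAutomaton.

Theorem lemma2 (Sig Del Om : ranked) (T1 : tdtt Sig Del) (T2 : tdtt Del Om) :
  wf_td T1 -> wf_td T2 ->
  forall (q : st T1) (S : {set st T2}) (s : tree Sig) (t : tree Del),
    wr s -> wr t ->
    produces (prod_rules (td_rules T1) (dom_aut_rules T2)) (q, S) s t ->
    S != set0 ->
    forall q2 : st T2, q2 \in S -> in_dom (td_rules T2) q2 t.
Proof.
move=> wf1 wf2 q S s t _ _; exact: embed_in_outputs_in_cap_dom.
Qed.
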